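(* Let $E$ be a finite graph, let $R$ be a unital subring of $\mathbb C$ closed under complex conjugation that has an essentially unique partition of the unit, and let $u\in L_R(E)$ be a unitary ($uu^*=u^*u=1$). Then there exist paths $\alpha_1,\dots,\alpha_n,\beta_1,\dots,\beta_n\in E^*$ and $\lambda_1,\dots,\lambda_n\in R$ such that $u=\sum_{i=1}^n\lambda_i\alpha_i\beta_i^*$, $\sum_{i=1}^n\alpha_i\alpha_i^*=1$, $\sum_{i=1}^n\beta_i\beta_i^*=1$, and $|\lambda_i|=1$ for all $i$.
   Context: A unital subring $R\subseteq\mathbb C$ (containing $1$) closed under complex conjugation has an essentially unique partition of the unit if whenever $\lambda_1,\dots,\lambda_n\in R$ satisfy $\sum_{i=1}^n|\lambda_i|^2=1$, all but one of the $\lambda_i$ are zero. A graph $E=(E^0,E^1,r,s)$ has vertices $E^0$, edges $E^1$, and range and source maps $r,s$. A path is a word $e_1\cdots e_n$ with $r(e_i)=s(e_{i+1})$; vertices are paths of length $0$; $E^*$ is the set of finite paths. The Leavitt path algebra $L_R(E)$ is the universal $R$-algebra generated by pairwise orthogonal idempotents $\{v\}_{v\in E^0}$ and $\{e,e^*\}_{e\in E^1}$ with: $e^*f=0$ for $e\ne f$; $e^*e=r(e)$; $s(e)e=e=er(e)$; $e^*s(e)=e^*=r(e)e^*$; and $v=\sum_{e\in s^{-1}(v)}ee^*$ whenever $s^{-1}(v)$ is finite and nonempty. For $\alpha=e_1\cdots e_n$ put $\alpha^*=e_n^*\cdots e_1^*$. $L_R(E)$ carries the conjugate-linear involution $(\lambda\alpha\beta^*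 )^*=\overline\lambda\beta\alpha^*$, and for finite $E$, $1=\sum_{v\in E^0}v$. *)

From HB Require Import structures.
From mathcomp Require Import all_boot all_order all_algebra.
Set Implicit Arguments. Unset Strict Implicit. Unset Printing Implicit Defensive.
Import Order.TTheory GRing.Theory Num.Theory.
Local Open Scope ring_scope.

(* A finite graph E = (V, Ed, r, s) is given by two finTypes V (vertices),
   Ed (edges) and maps s r : Ed -> V (source, range). *)

(* A path is represented as a pair (v, es) : V * seq Ed.  If es = [::] it is
   the vertex (length-0 path) v; otherwise es = e1 ... en with s e1 = v and
   r e_i = s e_(i+1). *)
Definition is_gpath (V Ed : finType) (s r : Ed -> V) (p : V * seq Ed) : bool :=
  match p.2 with
  | [::] => true
  | e :: es => (s e == p.1) && path (fun e f => r e == s f) e es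
  end.

Definition pmon (V Ed : finType) (B : pzRingType) (pv : V -> B) (pe : Ed -> B)
  (p : V * seq Ed) : B :=
  if p.2 is [::] then pv p.1 else \prod_(e <- p.2) pe e.

Definition pmon_star (V Ed : finType) (B : pzRingType) (pv : V -> B) (pe' : Ed -> B)
  (p : V * seq Ed) : B :=
  if p.2 is [::] then pv p.1 else \prod_(e <- rev p.2) pe' e.

(* Leavitt E-family in a unital ring B (E finite, so we also record
   1 = sum_v v, which holds in L_R(E) for finite E). *)
Definition LeavittFamily (V Ed : finType) (s r : Ed -> V) (B : pzRingType)
  (pv : V -> B) (pe pe' : Ed -> B) : Prop :=
  (forall v, pv v * pv v = pv v) /\
  (forall v w, v != w -> pv v * pv w = 0) /\
  (forall e f, e != f -> pe' e * pe f = 0) /\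
  (forall e, pe' e * pe e = pv (r e)) /\
  (forall e, pv (s e) * pe e = pe e /\ pe e * pv (r e) = pe e) /\
  (forall e, pe' e * pv (s e) = pe' e /\ pv (r e) * pe' e = pe' e) /\
  (forall v, (exists e, s e = v) -> pv v = \sum_(e | s e == v) pe e * pe' e) /\
  \sum_(v : V) pv v = 1.

Definition is_alg_hom (R : pzRingType) (A B : algType R) (f : A -> B) : Prop :=
  (forall x y, f (x + y) = f x + f y) /\
  (forall x y, f (x * y) = f x * f y) /\
  f 1 = 1 /\
  (forall (k : R) x, f (k *: x) = k *: f x).

Definition IsLeavittPathAlgebra (R : comPzRingType) (V Ed : finType) (s r : Ed -> V)
  (A : algType R) (pv : V -> A) (pe pe' : Ed -> A) : Prop :=
  LeavittFamily s r pv pe pe' /\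
  (forall (B : algType R) (qv : V -> B) (qe qe' : Ed -> B),
      LeavittFamily s r qv qe qe' ->
      exists f : A -> B, is_alg_hom f /\ (forall v, f (pv v) = qv v) /\
        (forall e, f (pe e) = qe e /\ f (pe' e) = qe' e)) /\
  (forall (B : algType R) (f g : A -> B), is_alg_hom f -> is_alg_hom g ->
      (forall v, f (pv v) = g (pv v)) ->
      (forall e, f (pe e) = g (pe e) /\ f (pe' e) = g (pe' e)) ->
      forall x, f x = g x).

Definition IsLPAInvolution (R : comPzRingType) (V Ed : finType) (A : algType R)
  (conjR : R -> R) (pv : V -> A) (pe pe' : Ed -> A) (star : A -> A) : Prop :=
  (forall x y, star (x + y) = star x + star y) /\
  (forall x y, star (x * y) = star y * star x) /\
  (forall (k : R) x, star (k *: x) = conjR k *: star x) /\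
  (forall x, star (star x) = x) /\
  (forall v, star (pv v) = pv v) /\
  (forall e, star (pe e) = pe' e /\ star (pe' e) = pe e).

Definition EUPU (R : comPzRingType) (C : numClosedFieldType) (iota : R -> C) : Prop :=
  forall (n : nat) (l : 'I_n -> R),
    \sum_(i < n) `|iota (l i)| ^+ 2 = 1 ->
    exists i : 'I_n, forall j : 'I_n, j != i -> l j = 0.

(* Every element of L_R(E) is an R-combination of monomials alpha beta^*.  Write
   u = sum_i l_i alpha_i beta_i^* and refine the partition of unity 1 = sum_v v into
   1 = sum_gamma gamma gamma^* until every gamma is at least as long as each beta_i or
   ends in a sink.  Then u gamma is a combination of paths ending at r(gamma), and
   (u gamma)^* (u gamma) = gamma^* gamma = r(gamma).  A linear functional phi with
   phi(rho^* sigma) = [rho = sigma] on paths ending at r(gamma), read off a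
   representation of L_R(E) on functions of infinite (or sink-terminated) paths,
   turns this into sum |mu_rho|^2 = 1, so the essentially unique partition of the
   unit gives u gamma = lambda rho with |lambda| = 1.  Hence u = sum lambda rho gamma^*,
   and sum rho rho^* = sum u gamma gamma^* u^* = u u^* = 1. *)

From HB Require Import structures.
From mathcomp Require Import all_boot all_order all_algebra.
From mathcomp Require Import boolp zify.
Import Order.TTheory GRing.Theory Num.Theory.
Local Open Scope ring_scope.
Set Implicit Arguments. Unset Strict Implicit. Unset Printing Implicit Defensive.

Section LeavittFamilyTheory.
Variables (V Ed : finType) (s r : Ed -> V) (B : pzRingType) (pv : V -> B) (pe pe' : Ed -> B).
Local Notation gp := (is_gpath s r).

Definition pend (p : V * seq Ed) : V := last p.1 (map r p.2).

Lemma gpath_cons v e es : gp (v, e :: es) = (s e == v) && gp (r e, es).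
Proof.
rewrite /is_gpath /=; case: es => [|f fs] /=; first by rewrite andbT.
by rewrite (eq_sym (s f)).
Qed.

Lemma gpath_edge e : gp (s e, [:: e]).
Proof. by rewrite /is_gpath /= eqxx. Qed.

Lemma gpath_rcons p e : gp p -> s e = pend p -> gp (p.1, rcons p.2 e).
Proof.
case: p => v [|f fs]; rewrite /is_gpath /=; first by move=> _ ->; rewrite eqxx.
move=> /andP[-> Hp] He /=; rewrite rcons_path Hp /=.
by rewrite He /pend /= (last_map r) eqxx.
Qed.

Lemma pend_rcons p e : pend (p.1, rcons p.2 e) = r e.
Proof. by rewrite /pend /= map_rcons last_rcons. Qed.

Lemma gpath_cat a b : gp a -> gp b -> pend a = b.1 -> gp (a.1, a.2 ++ b.2).
Proof.
case: a => v es; case: b => w fs /= Ha Hb Hab.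
elim: es v Ha Hab => [|e es IH] v Ha Hab /=; first by rewrite /pend /= in Hab; subst.
rewrite gpath_cons in Ha; case/andP: Ha => /eqP <- Ha.
by rewrite gpath_cons eqxx /=; apply: IH.
Qed.

Lemma pend_cat a b : pend a = b.1 -> pend (a.1, a.2 ++ b.2) = pend b.
Proof. by case: a => v es; case: b => w fs /=; rewrite /pend /= map_cat last_cat => ->. Qed.

Definition is_sink (v : V) := forall e, s e <> v.

Hypothesis hL : LeavittFamily s r pv pe pe'.

Lemma lf_idem v : pv v * pv v = pv v. Proof. by case: hL. Qed.
Lemma lf_orth v w : v != w -> pv v * pv w = 0. Proof. by case: hL => _ [H _]; apply: H. Qed.
Lemma lf_ghost_orth e f : e != f -> pe' e * pe f = 0. Proof. by case: hL => _ [] _ [H _]; apply: H. Qed.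
Lemma lf_ghost_edge e : pe' e * pe e = pv (r e). Proof. by case: hL => _ [] _ [] _ [H _]. Qed.
Lemma lf_src_edge e : pv (s e) * pe e = pe e.
Proof. by case: hL => _ [] _ [] _ [] _ [] H _; case: (H e). Qed.
Lemma lf_edge_rng e : pe e * pv (r e) = pe e.
Proof. by case: hL => _ [] _ [] _ [] _ [] H _; case: (H e). Qed.
Lemma lf_ghost_src e : pe' e * pv (s e) = pe' e.
Proof. by case: hL => _ [] _ [] _ [] _ [] _ [] H _; case: (H e). Qed.
Lemma lf_rng_ghost e : pv (r e) * pe' e = pe' e.
Proof. by case: hL => _ [] _ [] _ [] _ [] _ [] H _; case: (H e). Qed.
Lemma lf_cuntz_krieger v : (exists e, s e = v) -> pv v = \sum_(e | s e == v) pe e * pe' e.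
Proof. by case: hL => _ [] _ [] _ [] _ [] _ [] _ [] H _; apply: H. Qed.
Lemma lf_sum_vertices : \sum_(v : V) pv v = 1.
Proof. by case: hL => _ [] _ [] _ [] _ [] _ [] _ [] _. Qed.

Lemma lf_ghost_vertex0 v e : v != s e -> pe' e * pv v = 0.
Proof. by move=> H; rewrite -lf_ghost_src -mulrA lf_orth 1?eq_sym // mulr0. Qed.

Local Notation mon := (pmon pv pe).
Local Notation mon' := (pmon_star pv pe').

Lemma pmon_cons v e es : gp (v, e :: es) -> mon (v, e :: es) = pe e * mon (r e, es).
Proof.
rewrite /pmon /= big_cons; case: es => [|f fs] _ /=; first by rewrite big_nil mulr1 lf_edge_rng.
by rewrite big_cons.
Qed.

Lemma pmon_star_cons v e es : gp (v, e :: es) -> mon' (v, e :: es) = mon' (r e, es) * pe' e.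
Proof.
rewrite /pmon_star /= rev_cons big_rcons; case: es => [|f fs] _ /=.
  by rewrite big_nil mul1r lf_rng_ghost.
by rewrite rev_cons big_rcons.
Qed.

Lemma pmon_src p : gp p -> pv p.1 * mon p = mon p.
Proof.
case: p => v [|e es] /=; first by rewrite /pmon /= lf_idem.
move=> H; rewrite pmon_cons // mulrA; move: H; rewrite gpath_cons => /andP[/eqP <- _].
by rewrite lf_src_edge.
Qed.

Lemma pmon_end p : gp p -> mon p * pv (pend p) = mon p.
Proof.
case: p => v es; elim: es v => [|e es IH] v /=; first by rewrite /pmon /pend /= lf_idem.
move=> H; rewrite pmon_cons // -mulrA; move: H; rewrite gpath_cons => /andP[_ H].
by rewrite -[pend _]/(pend (r e, es)) IH.
Qed.

Lemma pmon_star_src p : gp p -> mon' p * pv p.1 = mon' p.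
Proof.
case: p => v [|e es] /=; first by rewrite /pmon_star /= lf_idem.
move=> H; rewrite pmon_star_cons // -mulrA; move: H; rewrite gpath_cons => /andP[/eqP <- _].
by rewrite lf_ghost_src.
Qed.

Lemma pmon_star_end p : gp p -> pv (pend p) * mon' p = mon' p.
Proof.
case: p => v es; elim: es v => [|e es IH] v /=; first by rewrite /pmon_star /pend /= lf_idem.
move=> H; rewrite pmon_star_cons // mulrA; move: H; rewrite gpath_cons => /andP[_ H].
by rewrite -[pend _]/(pend (r e, es)) IH.
Qed.

Lemma pmon_rcons p e : gp p -> s e = pend p -> mon (p.1, rcons p.2 e) = mon p * pe e.
Proof.
case: p => v [|f fs] /= H He; rewrite /pmon /=.
  by rewrite /pend /= in He; rewrite big_cons big_nil mulr1 -He lf_src_edge.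
by rewrite -rcons_cons big_rcons.
Qed.

Lemma pmon_star_rcons p e : gp p -> s e = pend p -> mon' (p.1, rcons p.2 e) = pe' e * mon' p.
Proof.
case: p => v [|f fs] /= H He; rewrite /pmon_star /=.
  by rewrite /pend /= in He; rewrite big_cons big_nil mulr1 -He lf_ghost_src.
by rewrite -rcons_cons rev_rcons big_cons.
Qed.

Lemma pmon_starK p : gp p -> mon' p * mon p = pv (pend p).
Proof.
case: p => v es; elim: es v => [|e es IH] v /=; first by rewrite /pmon_star /pmon /pend /= lf_idem.
move=> H; rewrite pmon_star_cons // pmon_cons //; move: H; rewrite gpath_cons => /andP[_ H].
rewrite mulrA -(mulrA _ (pe' e)) lf_ghost_edge -[r e]/((r e, es).1) pmon_star_src //.
by rewrite -[pend _]/(pend (r e, es)) -IH.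
Qed.

Lemma pmon_star_mul b g : gp b -> gp g -> ((size b.2 <= size g.2)%N \/ is_sink (pend g)) ->
  mon' b * mon g = 0 \/
  exists rho, [/\ gp rho, pend rho = pend g & mon' b * mon g = mon rho].
Proof.
case: b => v es; elim: es v g => [|f fs IH] v [w gs] Hb Hg Hc.
  rewrite /pmon_star /=; have [E|ne] := eqVneq v w.
    by subst w; right; exists (v, gs); split=> //; rewrite (pmon_src Hg).
  by left; rewrite -[mon _]pmon_src // mulrA lf_orth // mul0r.
rewrite pmon_star_cons //; move: Hb; rewrite gpath_cons => /andP[/eqP sf Hb].
case: gs Hg Hc => [|g gs] Hg Hc.
  have ne : w != s f by apply/eqP => E; case: Hc => //= Hs; exact: (Hs f (esym E)).
  by left; rewrite /pmon /= -mulrA lf_ghost_vertex0 // mulr0.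
have [E|ne] := eqVneq f g; last first.
  by left; rewrite (pmon_cons Hg) mulrA -(mulrA _ (pe' f)) lf_ghost_orth // mulr0 mul0r.
subst g; rewrite (pmon_cons Hg) mulrA -(mulrA _ (pe' f)) lf_ghost_edge -[r f]/((r f, fs).1).
rewrite pmon_star_src //; move: Hg; rewrite gpath_cons => /andP[_ Hg].
exact: IH.
Qed.

Lemma pmon_mul a b : gp a -> gp b ->
  mon a * mon b = 0 \/
  exists rho, [/\ gp rho, pend rho = pend b & mon a * mon b = mon rho].
Proof.
move=> Ha Hb; have [E|ne] := eqVneq (pend a) b.1; last first.
  left; rewrite -(pmon_end Ha) -(pmon_src Hb) mulrA -(mulrA (mon a)).
  by rewrite lf_orth // mulr0 mul0r.
right; exists (a.1, a.2 ++ b.2); split; [exact: gpath_cat | exact: pend_cat|].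
case: a Ha E => v es; case: b Hb => w fs Hb Ha E /=.
case: es Ha E => [|e es] Ha E; first by rewrite /pend /= in E; subst w; exact: (pmon_src Hb).
case: fs Hb E => [|f fs] Hb E; first by rewrite cats0 /= in E *; subst w; exact: (pmon_end Ha).
by rewrite /pmon /= -cat_cons big_cat.
Qed.

Definition path_extensions (g : V * seq Ed) : seq (V * seq Ed) :=
  if [exists e, s e == pend g] then
    [seq (g.1, rcons g.2 e) | e <- [seq e <- index_enum Ed | s e == pend g]]
  else [:: g].

Lemma path_extensions_sum g : gp g ->
  \sum_(h <- path_extensions g) mon h * mon' h = mon g * mon' g.
Proof.
move=> Hg; rewrite /path_extensions; case: ifP => [/existsP[e0 /eqP He0]|_]; last first.
  by rewrite big_seq1.
rewrite big_map big_filter.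
under eq_bigr => e /eqP se do
  rewrite (pmon_rcons Hg se) (pmon_star_rcons Hg se) mulrA -(mulrA _ (pe e)).
by rewrite -mulr_suml -mulr_sumr -lf_cuntz_krieger ?(pmon_end Hg) //; exists e0.
Qed.

Lemma path_partition_of_unity k : exists n (g : 'I_n -> V * seq Ed),
  [/\ forall i, gp (g i), \sum_i mon (g i) * mon' (g i) = 1 &
      forall i, (k <= size (g i).2)%N \/ is_sink (pend (g i))].
Proof.
suff [P [Pgp Psum Plong]] : exists P : seq (V * seq Ed),
    [/\ forall g, g \in P -> gp g, \sum_(g <- P) mon g * mon' g = 1 &
        forall g, g \in P -> (k <= size g.2)%N \/ is_sink (pend g)].
  exists (size P), (tnth (in_tuple P)); split.
  - by move=> i; apply/Pgp/mem_tnth.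
  - by rewrite -Psum [in RHS]big_tnth.
  - by move=> i; apply/Plong/mem_tnth.
elim: k => [|k [P [Pgp Psum Plong]]].
  exists [seq (v, [::]) | v <- index_enum V]; split.
  - by move=> g /mapP[v _ ->].
  - by rewrite big_map -lf_sum_vertices; apply: eq_bigr => v _; rewrite /= lf_idem.
  - by move=> g _; left.
exists (flatten [seq path_extensions g | g <- P]); split.
- move=> h /flattenP[l /mapP[g Hg ->]]; rewrite /path_extensions; case: ifP => _; last first.
    by rewrite inE => /eqP ->; exact: Pgp.
  move=> /mapP[e]; rewrite mem_filter => /andP[/eqP se _] ->.
  exact: gpath_rcons (Pgp _ Hg) se.
- rewrite big_flatten big_map -Psum; apply: eq_big_seq => g Hg.
  exact/path_extensions_sum/Pgp.
- move=> h /flattenP[l /mapP[g Hg ->]]; rewrite /path_extensions.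
  case: ifP => [/existsP[e0 /eqP He0]|ns].
    move=> /mapP[e]; rewrite mem_filter => /andP[/eqP se _] ->; left => /=.
    rewrite size_rcons ltnS; case: (Plong _ Hg) => // Hs; by case: (Hs e0).
  rewrite inE => /eqP ->; right => e E; move/negbT: ns => /existsP; apply; exists e.
  by rewrite E.
Qed.

End LeavittFamilyTheory.

Section AlgHom.
Variables (R : pzRingType) (A B : algType R) (f : A -> B) (hf : is_alg_hom f).

Lemma alg_homD x y : f (x + y) = f x + f y. Proof. by case: hf. Qed.
Lemma alg_homM x y : f (x * y) = f x * f y. Proof. by case: hf => _ []. Qed.
Lemma alg_hom1 : f 1 = 1. Proof. by case: hf => _ [] _ []. Qed.
Lemma alg_homZ k x : f (k *: x) = k *: f x. Proof. by case: hf => _ [] _ []. Qed.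

Lemma alg_hom_prod (I : Type) (rr : seq I) (F : I -> A) :
  f (\prod_(i <- rr) F i) = \prod_(i <- rr) f (F i).
Proof. by elim: rr => [|i rr IH]; rewrite ?big_nil ?alg_hom1 // !big_cons alg_homM IH. Qed.

Variables (V Ed : finType) (pv : V -> A) (pe : Ed -> A).

Lemma alg_hom_pmon p : f (pmon pv pe p) = pmon (f \o pv) (f \o pe) p.
Proof. by rewrite /pmon; case: p.2 => [|e es] //; rewrite alg_hom_prod. Qed.

Lemma alg_hom_pmon_star p : f (pmon_star pv pe p) = pmon_star (f \o pv) (f \o pe) p.
Proof. by rewrite /pmon_star; case: p.2 => [|e es] //; rewrite alg_hom_prod. Qed.

End AlgHom.

Section Involution.
Variables (R : comPzRingType) (V Ed : finType) (A : algType R) (conjR : R -> R)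
  (pv : V -> A) (pe pe' : Ed -> A) (star : A -> A)
  (hstar : IsLPAInvolution conjR pv pe pe' star).

Lemma starD x y : star (x + y) = star x + star y. Proof. by case: hstar. Qed.
Lemma starM x y : star (x * y) = star y * star x. Proof. by case: hstar => _ []. Qed.
Lemma starZ k x : star (k *: x) = conjR k *: star x. Proof. by case: hstar => _ [] _ []. Qed.
Lemma starK x : star (star x) = x. Proof. by case: hstar => _ [] _ [] _ []. Qed.
Lemma star_vertex v : star (pv v) = pv v. Proof. by case: hstar => _ [] _ [] _ [] _ []. Qed.
Lemma star_edge e : star (pe e) = pe' e.
Proof. by case: hstar => _ [] _ [] _ [] _ [] _ H; case: (H e). Qed.

Lemma star0 : star 0 = 0.
Proof. by apply: (addrI (star 0)); rewrite -starD !addr0. Qed.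

Lemma star1 : star 1 = 1.
Proof. by have := starM 1 (star 1); rewrite mul1r starK mul1r. Qed.

Lemma star_sum (I : Type) (rr : seq I) (P : pred I) (F : I -> A) :
  star (\sum_(i <- rr | P i) F i) = \sum_(i <- rr | P i) star (F i).
Proof. by elim/big_rec2: _ => [|i y1 y2 _ <-]; rewrite ?star0 ?starD. Qed.

Lemma star_pmon p : star (pmon pv pe p) = pmon_star pv pe' p.
Proof.
rewrite /pmon /pmon_star; case: p => v [|e es] /=; first exact: star_vertex.
elim: (e :: es) => [|f fs IH]; first by rewrite !big_nil star1.
by rewrite big_cons starM IH rev_cons big_rcons star_edge.
Qed.

End Involution.

Section LinearCombination.
Variables (R : pzRingType) (M : lmodType R).

Definition lincomb (G : M -> Prop) (x : M) := exists n (c : 'I_n -> M) (l : 'I_n -> R),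
  (forall i, G (c i)) /\ x = \sum_(i < n) l i *: c i.

Variable G : M -> Prop.

Lemma lincomb0 : lincomb G 0.
Proof. by exists 0%N, (fun _ => 0), (fun _ => 0); split; [case | rewrite big_ord0]. Qed.

Lemma lincomb_gen x : G x -> lincomb G x.
Proof. by move=> Gx; exists 1%N, (fun _ => x), (fun _ => 1); rewrite big_ord1 scale1r. Qed.

Lemma lincombD x y : lincomb G x -> lincomb G y -> lincomb G (x + y).
Proof.
move=> [n1 [c1 [l1 [G1 ->]]]] [n2 [c2 [l2 [G2 ->]]]].
exists (n1 + n2)%N, (fun i => match split i with inl j => c1 j | inr j => c2 j end),
  (fun i => match split i with inl j => l1 j | inr j => l2 j end); split.
  by move=> i; case: split.
rewrite big_split_ord /=; congr (_ + _); apply: eq_bigr => j _.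
  by rewrite -[lshift _ _]/(unsplit (inl j)) unsplitK.
by rewrite -[rshift _ _]/(unsplit (inr j)) unsplitK.
Qed.

Lemma lincombZ k x : lincomb G x -> lincomb G (k *: x).
Proof.
move=> [n [c [l [Gc ->]]]]; exists n, c, (fun i => k * l i); split=> //.
by rewrite scaler_sumr; apply: eq_bigr => i _; rewrite scalerA.
Qed.

Lemma lincomb_sum (I : Type) (rr : seq I) (P : pred I) (F : I -> M) :
  (forall i, P i -> lincomb G (F i)) -> lincomb G (\sum_(i <- rr | P i) F i).
Proof.
move=> H; elim/big_rec: _ => [|i x Pi]; first exact: lincomb0.
exact: lincombD (H _ Pi).
Qed.

Lemma lincomb_bound (H : nat -> M -> Prop) x :
  (forall N K y, (N <= K)%N -> H N y -> H K y) ->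
  lincomb (fun y => exists N, H N y) x -> exists N, lincomb (H N) x.
Proof.
move=> Hmono [n [c [l [Gc ->]]]]; have [N HN] := choice Gc.
exists (\max_i N i)%N, n, c, l; split=> // i.
exact: Hmono (leq_bigmax i) (HN i).
Qed.

End LinearCombination.

Lemma lincomb_mulr (R : pzRingType) (A : algType R) (G H : A -> Prop) x z :
  lincomb G x -> (forall y, G y -> lincomb H (y * z)) -> lincomb H (x * z).
Proof.
move=> [n [c [l [Gc ->]]]] HG; rewrite mulr_suml; apply: lincomb_sum => i _.
by rewrite -scalerAl; apply/lincombZ/HG.
Qed.

Lemma lincomb_mull (R : pzRingType) (A : algType R) (G : A -> Prop) x z :
  lincomb G x -> (forall y, G y -> lincomb G (z * y)) -> lincomb G (z * x).
Proof.
move=> [n [c [l [Gc ->]]]] HG; rewrite mulr_sumr; apply: lincomb_sum => i _.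
by rewrite -scalerAr; apply/lincombZ/HG.
Qed.

Definition submod_pred (R : pzRingType) (M : lmodType R) (S : M -> Prop) :=
  [/\ S 0, forall x y, S x -> S y -> S (x + y) & forall k x, S x -> S (k *: x)].

(* The subalgebra of [A] stabilizing [S] under left multiplication; the otherwise
   unused parameter [hS] makes its algebra structure inferable from the type. *)
Record stab (R : nzRingType) (A : algType R) (S : A -> Prop) (hS : submod_pred S) :=
  Stab { stab_val : A; stab_mulP : forall x, S x -> S (stab_val * x) }.
Arguments Stab {R A S hS stab_val}.
Arguments stab_val {R A S hS}.
Arguments stab_mulP {R A S hS}.

Section Stabilizer.
Variables (R : nzRingType) (A : algType R) (S : A -> Prop) (hS : submod_pred S).

Local Notation stab := (stab hS).

Lemma stab_ext (a b : stab) : stab_val a = stab_val b -> a = b.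
Proof. by case: a b => a Pa [b Pb] /= E; subst b; congr Stab; exact: Prop_irrelevance. Qed.

Let S0 : S 0. Proof. by case: hS. Qed.
Let SD x y : S x -> S y -> S (x + y). Proof. by case: hS => _ + _; apply. Qed.
Let SZ k x : S x -> S (k *: x). Proof. by case: hS => _ _; apply. Qed.

Definition stab0 : stab := Stab (fun x _ => eq_ind_r S S0 (mul0r x)).
Definition stab1 : stab := Stab (fun x Sx => eq_ind_r S Sx (mul1r x)).
Definition stab_add (a b : stab) : stab.
exists (stab_val a + stab_val b) => x Sx; rewrite mulrDl; apply: SD; exact: stab_mulP.
Defined.
Definition stab_opp (a : stab) : stab.
exists (- stab_val a) => x Sx; rewrite mulNr -scaleN1r; apply: SZ; exact: stab_mulP.
Defined.
Definition stab_mul (a b : stab) : stab.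
exists (stab_val a * stab_val b) => x Sx; rewrite -mulrA; do 2 apply: stab_mulP => //.
Defined.
Definition stab_scale (k : R) (a : stab) : stab.
exists (k *: stab_val a) => x Sx; rewrite -scalerAl; apply: SZ; exact: stab_mulP.
Defined.

HB.instance Definition _ := gen_eqMixin stab.
HB.instance Definition _ := gen_choiceMixin stab.

Lemma stab_addA : associative stab_add.
Proof. by move=> a b c; apply: stab_ext; rewrite /= addrA. Qed.
Lemma stab_addC : commutative stab_add.
Proof. by move=> a b; apply: stab_ext; rewrite /= addrC. Qed.
Lemma stab_add0 : left_id stab0 stab_add.
Proof. by move=> a; apply: stab_ext; rewrite /= add0r. Qed.
Lemma stab_addN : left_inverse stab0 stab_opp stab_add.
Proof. by move=> a; apply: stab_ext; rewrite /= addNr. Qed.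
HB.instance Definition _ := GRing.isZmodule.Build stab stab_addA stab_addC stab_add0 stab_addN.

Lemma stab_mulA : associative stab_mul.
Proof. by move=> a b c; apply: stab_ext; rewrite /= mulrA. Qed.
Lemma stab_mul1 : left_id stab1 stab_mul.
Proof. by move=> a; apply: stab_ext; rewrite /= mul1r. Qed.
Lemma stab_mulr1 : right_id stab1 stab_mul.
Proof. by move=> a; apply: stab_ext; rewrite /= mulr1. Qed.
Lemma stab_mulDl : left_distributive stab_mul +%R.
Proof. by move=> a b c; apply: stab_ext; rewrite /= mulrDl. Qed.
Lemma stab_mulDr : right_distributive stab_mul +%R.
Proof. by move=> a b c; apply: stab_ext; rewrite /= mulrDr. Qed.
Lemma stab1_neq0 : stab1 != 0.
Proof. by apply/eqP => /(congr1 stab_val) /= /eqP; rewrite oner_eq0. Qed.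
HB.instance Definition _ := GRing.Zmodule_isNzRing.Build stab
  stab_mulA stab_mul1 stab_mulr1 stab_mulDl stab_mulDr stab1_neq0.

Lemma stab_scaleA a b (v : stab) : stab_scale a (stab_scale b v) = stab_scale (a * b) v.
Proof. by apply: stab_ext; rewrite /= scalerA. Qed.
Lemma stab_scale1 : left_id 1 stab_scale.
Proof. by move=> a; apply: stab_ext; rewrite /= scale1r. Qed.
Lemma stab_scaleDr : right_distributive stab_scale +%R.
Proof. by move=> k a b; apply: stab_ext; rewrite /= scalerDr. Qed.
Lemma stab_scaleDl (v : stab) : {morph stab_scale^~ v : a b / a + b}.
Proof. by move=> a b; apply: stab_ext; rewrite /= scalerDl. Qed.
HB.instance Definition _ := GRing.Zmodule_isLmodule.Build R stab
  stab_scaleA stab_scale1 stab_scaleDr stab_scaleDl.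

Lemma stab_scaleAl (k : R) (a b : stab) : k *: (a * b) = (k *: a) * b.
Proof. by apply: stab_ext; rewrite /= scalerAl. Qed.
HB.instance Definition _ := GRing.Lmodule_isLalgebra.Build R stab stab_scaleAl.

Lemma stab_scaleAr (k : R) (a b : stab) : k *: (a * b) = a * (k *: b).
Proof. by apply: stab_ext; rewrite /= scalerAr. Qed.
HB.instance Definition _ := GRing.Lalgebra_isAlgebra.Build R stab stab_scaleAr.

End Stabilizer.

Section LeavittSpan.
Variables (R : comNzRingType) (V Ed : finType) (s r : Ed -> V)
  (A : algType R) (pv : V -> A) (pe pe' : Ed -> A)
  (hA : IsLeavittPathAlgebra s r pv pe pe').
Local Notation gp := (is_gpath s r).
Local Notation mon := (pmon pv pe).
Local Notation mon' := (pmon_star pv pe').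
Let hL : LeavittFamily s r pv pe pe' := hA.1.

(* The generators lift to [stab hS]; by uniqueness in the universal property every
   [x] then stabilizes [S], whence [x = x * 1] lies in [S]. *)
Lemma lpa_stable_submod_full (S : A -> Prop) (hS : submod_pred S) : S 1 ->
  (forall v x, S x -> S (pv v * x)) -> (forall e x, S x -> S (pe e * x)) ->
  (forall e x, S x -> S (pe' e * x)) -> forall x, S x.
Proof.
move=> S1 Sv Se Se' x; case: hA => _ [lift lift_uniq].
pose Lv v : stab hS := Stab (Sv v); pose Le e : stab hS := Stab (Se e).
pose Le' e : stab hS := Stab (Se' e).
have hLL : LeavittFamily s r Lv Le Le'.
  have valS (I : Type) (rr : seq I) (P : pred I) (F : I -> stab hS) :
      stab_val (\sum_(i <- rr | P i) F i) = \sum_(i <- rr | P i) stab_val (F i).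
    by elim/big_rec2: _ => // i y1 y2 _ <-.
  case: hL => h1 [h2 [h3 [h4 [h5 [h6 [h7 h8]]]]]].
  split; [|split; [|split; [|split; [|split; [|split; [|split]]]]]].
  - by move=> v; apply: stab_ext; rewrite /= h1.
  - by move=> v w ne; apply: stab_ext; rewrite /= h2.
  - by move=> e f ne; apply: stab_ext; rewrite /= h3.
  - by move=> e; apply: stab_ext; rewrite /= h4.
  - by move=> e; split; apply: stab_ext; case: (h5 e).
  - by move=> e; split; apply: stab_ext; case: (h6 e).
  - by move=> v Hv; apply: stab_ext; rewrite valS /= (h7 v Hv).
  - by apply: stab_ext; rewrite valS /= h8.
have [f [hf [fv fe]]] := lift _ _ _ _ hLL.
have hvalf : is_alg_hom (stab_val \o f).
  split; [|split; [|split]] => *; rewrite /= ?alg_homD ?alg_homM ?alg_hom1 ?alg_homZ //.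
have valfx : stab_val (f x) = x.
  apply: (lift_uniq _ _ _ hvalf) => // [v|e]; first by rewrite /= fv.
  by rewrite /=; case: (fe e) => -> ->.
by have := stab_mulP (f x) _ S1; rewrite valfx mulr1.
Qed.

Definition short_pmon (N : nat) (y : A) := exists a b,
  [/\ gp a, gp b, (size b.2 <= N)%N & y = mon a * mon' b].
Local Notation span := (lincomb (fun y => exists N, short_pmon N y)).

Lemma span_pmon_mul g a b : gp a -> gp b ->
  g * mon a = 0 \/ (exists rho, gp rho /\ g * mon a = mon rho) ->
  span (g * (mon a * mon' b)).
Proof.
move=> Ha Hb [E|[rho [Hr E]]]; rewrite mulrA E ?mul0r; first exact: lincomb0.
by apply: lincomb_gen; exists (size b.2), rho, b.
Qed.

Lemma span_vertex_mul v a b : gp a -> gp b -> span (pv v * (mon a * mon' b)).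
Proof.
move=> Ha Hb; apply: span_pmon_mul => //.
have [E|[rho [Hr _ E]]] := pmon_star_mul hL (isT : gp (v, [::])) Ha (or_introl (leq0n _)).
  by left.
by right; exists rho.
Qed.

Lemma span_edge_mul e a b : gp a -> gp b -> span (pe e * (mon a * mon' b)).
Proof.
move=> Ha Hb; apply: span_pmon_mul => //.
have pe1 : mon (s e, [:: e]) = pe e by rewrite /pmon /= big_seq1.
have [E|[rho [Hr _ E]]] := pmon_mul hL (gpath_edge s r e) Ha; rewrite pe1 in E.
  by left.
by right; exists rho.
Qed.

Lemma span_ghost_mul e a b : gp a -> gp b -> span (pe' e * (mon a * mon' b)).
Proof.
move=> Ha Hb; case: a Ha => w [|f fs] Ha.
  rewrite /pmon /=; have [<-|ne] := eqVneq (s e) w; last first.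
    by rewrite mulrA (lf_ghost_vertex0 hL) 1?eq_sym // mul0r; exact: lincomb0.
  rewrite mulrA (lf_ghost_src hL); have [Eb|neb] := eqVneq (s e) (pend r b); last first.
    rewrite -(pmon_star_end hL Hb) mulrA (lf_ghost_vertex0 hL) 1?eq_sym // mul0r.
    exact: lincomb0.
  rewrite -(pmon_star_rcons hL Hb Eb) -(pmon_star_end hL (gpath_rcons Hb Eb)) pend_rcons.
  rewrite -[pv (r e)]/(mon (r e, [::])); apply: lincomb_gen.
  by exists (size (rcons b.2 e)), (r e, [::]), (b.1, rcons b.2 e); split=> //; apply: gpath_rcons.
apply: span_pmon_mul => //.
have pe1 : mon' (s e, [:: e]) = pe' e by rewrite /pmon_star /= big_seq1.
have [E|[rho [Hr _ E]]] := pmon_star_mul hL (gpath_edge s r e) Ha (or_introl (ltn0Sn _)).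
  by left; rewrite -pe1.
by right; exists rho; rewrite -pe1.
Qed.

Lemma lpa_span_short_pmon x : exists N, lincomb (short_pmon N) x.
Proof.
apply: lincomb_bound => [N K y leNK [a [b [Ha Hb Hsz ->]]]|].
  by exists a, b; split=> //; apply: leq_trans leNK.
have hS : submod_pred span by split; [exact: lincomb0 | exact: lincombD | exact: lincombZ].
apply: (lpa_stable_submod_full hS) => {x} [|v x|e x|e x].
- rewrite -(lf_sum_vertices hL); apply: lincomb_sum => v _; rewrite -(lf_idem hL).
  by apply: lincomb_gen; exists 0%N, (v, [::]), (v, [::]).
all: move/lincomb_mull; apply=> _ [_ [a [b [Ha Hb _ ->]]]].
- exact: span_vertex_mul.
- exact: span_edge_mul.
- exact: span_ghost_mul.
Qed.

End LeavittSpan.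

Record linend (R : comNzRingType) (T : Type) (t0 : T) := LinEnd {
  lapp : (T -> R) -> T -> R;
  lappD : forall g h t, lapp (fun t' => g t' + h t') t = lapp g t + lapp h t;
  lappZ : forall k g t, lapp (fun t' => k * g t') t = k * lapp g t }.
Arguments linend : clear implicits.
Arguments LinEnd {R T t0}.
Arguments lapp {R T t0}.

Section LinearEndomorphisms.
Variables (R : comNzRingType) (T : Type) (t0 : T).
Local Notation L := (linend R T t0).

Lemma linend_ext (a b : L) : (forall g t, lapp a g t = lapp b g t) -> a = b.
Proof.
case: a b => fa Da Za [fb Db Zb] /= H.
have E : fa = fb by apply: funext => g; apply: funext => t; apply: H.
by subst fb; congr LinEnd; exact: Prop_irrelevance.
Qed.

Definition linend0 : L := LinEnd (fun _ _ => 0) (fun _ _ _ => esym (addr0 0))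
  (fun k _ _ => esym (mulr0 k)).
Definition linend1 : L := LinEnd id (fun _ _ _ => erefl) (fun _ _ _ => erefl).
Definition linend_add (a b : L) : L.
exists (fun g t => lapp a g t + lapp b g t).
- by move=> g h t; rewrite !lappD addrACA.
- by move=> k g t; rewrite !lappZ mulrDr.
Defined.
Definition linend_opp (a : L) : L.
exists (fun g t => - lapp a g t).
- by move=> g h t; rewrite !lappD opprD.
- by move=> k g t; rewrite !lappZ mulrN.
Defined.
Definition linend_mul (a b : L) : L.
exists (fun g => lapp a (lapp b g)).
- move=> g h t; rewrite -lappD; congr lapp; apply: funext => x; exact: lappD.
- move=> k g t; rewrite -lappZ; congr lapp; apply: funext => x; exact: lappZ.
Defined.
Definition linend_scale (k : R) (a : L) : L.
exists (fun g t => k * lapp a g t).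
- by move=> g h t; rewrite !lappD mulrDr.
- by move=> m g t; rewrite !lappZ mulrCA.
Defined.

HB.instance Definition _ := gen_eqMixin L.
HB.instance Definition _ := gen_choiceMixin L.

Lemma linend_addA : associative linend_add.
Proof. by move=> a b c; apply: linend_ext => g t /=; rewrite addrA. Qed.
Lemma linend_addC : commutative linend_add.
Proof. by move=> a b; apply: linend_ext => g t /=; rewrite addrC. Qed.
Lemma linend_add0 : left_id linend0 linend_add.
Proof. by move=> a; apply: linend_ext => g t /=; rewrite add0r. Qed.
Lemma linend_addN : left_inverse linend0 linend_opp linend_add.
Proof. by move=> a; apply: linend_ext => g t /=; rewrite addNr. Qed.
HB.instance Definition _ :=
  GRing.isZmodule.Build L linend_addA linend_addC linend_add0 linend_addN.

Lemma linend_mulA : associative linend_mul.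
Proof. by move=> a b c; apply: linend_ext. Qed.
Lemma linend_mul1 : left_id linend1 linend_mul.
Proof. by move=> a; apply: linend_ext. Qed.
Lemma linend_mulr1 : right_id linend1 linend_mul.
Proof. by move=> a; apply: linend_ext. Qed.
Lemma linend_mulDl : left_distributive linend_mul +%R.
Proof. by move=> a b c; apply: linend_ext. Qed.
Lemma linend_mulDr : right_distributive linend_mul +%R.
Proof. by move=> a b c; apply: linend_ext => g t /=; rewrite -lappD. Qed.
Lemma linend1_neq0 : linend1 != 0.
Proof.
apply/eqP => /(congr1 (fun a : L => lapp a (fun _ => 1) t0)) /=.
by move/eqP; rewrite oner_eq0.
Qed.
HB.instance Definition _ := GRing.Zmodule_isNzRing.Build L
  linend_mulA linend_mul1 linend_mulr1 linend_mulDl linend_mulDr linend1_neq0.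

Lemma linend_scaleA a b (v : L) : linend_scale a (linend_scale b v) = linend_scale (a * b) v.
Proof. by apply: linend_ext => g t /=; rewrite mulrA. Qed.
Lemma linend_scale1 : left_id 1 linend_scale.
Proof. by move=> a; apply: linend_ext => g t /=; rewrite mul1r. Qed.
Lemma linend_scaleDr : right_distributive linend_scale +%R.
Proof. by move=> k a b; apply: linend_ext => g t /=; rewrite mulrDr. Qed.
Lemma linend_scaleDl (v : L) : {morph linend_scale^~ v : a b / a + b}.
Proof. by move=> a b; apply: linend_ext => g t /=; rewrite mulrDl. Qed.
HB.instance Definition _ := GRing.Zmodule_isLmodule.Build R L
  linend_scaleA linend_scale1 linend_scaleDr linend_scaleDl.

Lemma linend_scaleAl (k : R) (a b : L) : k *: (a * b) = (k *: a) * b.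
Proof. by apply: linend_ext. Qed.
HB.instance Definition _ := GRing.Lmodule_isLalgebra.Build R L linend_scaleAl.

Lemma linend_scaleAr (k : R) (a b : L) : k *: (a * b) = a * (k *: b).
Proof. by apply: linend_ext => g t /=; rewrite -lappZ. Qed.
HB.instance Definition _ := GRing.Lalgebra_isAlgebra.Build R L linend_scaleAr.

Lemma lapp_sum (I : Type) (rr : seq I) (P : pred I) (F : I -> L) g t :
  lapp (\sum_(i <- rr | P i) F i) g t = \sum_(i <- rr | P i) lapp (F i) g t.
Proof. by elim/big_rec2: _ => // i y1 y2 _ <-. Qed.

End LinearEndomorphisms.

Section RayRepresentation.
Variables (V Ed : finType) (s r : Ed -> V) (R : comNzRingType).
Local Notation gp := (is_gpath s r).

(* A ray from [x.1] lists its [k]-th edge as [x.2 k]; [None] means the ray has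
   stopped at a sink, where it stays forever. *)
Definition ray := (V * (nat -> option Ed))%type.

Fixpoint ray_vertex (x : ray) (k : nat) : V :=
  if k is k'.+1 then
    if x.2 k' is Some e then r e else ray_vertex x k'
  else x.1.

Definition ray_maximal (x : ray) := forall k,
  if x.2 k is Some e then s e = ray_vertex x k else is_sink s (ray_vertex x k).

Definition mray := {x : ray | ray_maximal x}.

Definition ray_behead (x : ray) : ray := (ray_vertex x 1, fun k => x.2 k.+1).
Definition ray_cons (e : Ed) (x : ray) : ray :=
  (s e, fun k => if k is k'.+1 then x.2 k' else Some e).

Lemma ray_vertex_behead x k : ray_vertex (ray_behead x) k = ray_vertex x k.+1.
Proof. by elim: k => [|k IH] //=; rewrite IH. Qed.

Lemma ray_vertex_cons e x k : r e = x.1 -> ray_vertex (ray_cons e x) k.+1 = ray_vertex x k.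
Proof.
move=> E; elim: k => [|k IH]; first by rewrite /= E.
change ((if x.2 k is Some f then r f else ray_vertex (ray_cons e x) k.+1) = ray_vertex x k.+1).
by rewrite IH.
Qed.

Lemma ray_maximal_behead x : ray_maximal x -> ray_maximal (ray_behead x).
Proof. by move=> H k; rewrite ray_vertex_behead; exact: (H k.+1). Qed.

Lemma ray_maximal_cons e x : r e = x.1 -> ray_maximal x -> ray_maximal (ray_cons e x).
Proof.
move=> E H [|k] //.
change (if x.2 k is Some f then s f = ray_vertex (ray_cons e x) k.+1
        else is_sink s (ray_vertex (ray_cons e x) k.+1)).
by rewrite ray_vertex_cons //; exact: H.
Qed.

Lemma mray_ext (a b : mray) : sval a = sval b -> a = b.
Proof. by case: a b => a Ha [b Hb] /= E; subst b; congr exist; exact: Prop_irrelevance. Qed.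

Definition mray_behead (x : mray) : mray :=
  exist _ (ray_behead (sval x)) (ray_maximal_behead (proj2_sig x)).

(* Junk value: [x] itself when [e] cannot be prepended to [x]. *)
Definition mray_cons (e : Ed) (x : mray) : mray :=
  if @eqP _ (r e) (sval x).1 is ReflectT h then
    exist _ (ray_cons e (sval x)) (ray_maximal_cons h (proj2_sig x))
  else x.

Lemma mray_consE e x : r e = (sval x).1 -> sval (mray_cons e x) = ray_cons e (sval x).
Proof. by rewrite /mray_cons; case: eqP. Qed.

Lemma mray_consK e x : r e = (sval x).1 -> mray_behead (mray_cons e x) = x.
Proof.
move=> E; apply: mray_ext; rewrite /= mray_consE //; case: x E => [[v f] H] /= E.
by rewrite /ray_behead /= E.
Qed.

Definition mray_cat (es : seq Ed) (x : mray) : mray := foldr mray_cons x es.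

Lemma mray_cat_head v es x : gp (v, es) -> pend r (v, es) = (sval x).1 ->
  (sval (mray_cat es x)).1 = v.
Proof.
elim: es v => [|e es IH] v /=; first by rewrite /pend /= => _ ->.
rewrite gpath_cons => /andP[/eqP <- H] E.
by rewrite mray_consE // (IH _ H E).
Qed.

(* The state records a ray together with an integer counting edges removed minus
   edges prepended, so that paths of different lengths act on different levels. *)
Definition state := (mray * int)%type.

Variable t0 : state.
Local Notation L := (linend R state t0).

Definition vertex_op (v : V) : L.
exists (fun g t => if (sval t.1).1 == v then g t else 0) => *;
  by case: ifP; rewrite ?addr0 ?mulr0.
Defined.

Definition edge_op (e : Ed) : L.
exists (fun g t => if (sval t.1).2 0 == Some e then g (mray_behead t.1, t.2 - 1) else 0) => *;
  by case: ifP; rewrite ?addr0 ?mulr0.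
Defined.

Definition ghost_op (e : Ed) : L.
exists (fun g t => if r e == (sval t.1).1 then g (mray_cons e t.1, t.2 + 1) else 0) => *;
  by case: ifP; rewrite ?addr0 ?mulr0.
Defined.

Lemma ray_cuntz_krieger v : (exists e, s e = v) ->
  vertex_op v = \sum_(e | s e == v) edge_op e * ghost_op e.
Proof.
move=> [e0 He0]; apply: linend_ext => g t; rewrite lapp_sum /=.
case: t => [[[w f] H] n] /=; have H0 := H 0; simpl in H0.
case: eqP => [Ew|new]; last first.
  rewrite big1 // => e /eqP se /=; case: eqP => // E.
  by rewrite E /= in H0; case: new; rewrite -se.
subst w; case E0: (f 0) H0 => [e1|] H0; last by have := H0 e0 He0.
rewrite (bigD1 e1) /=; last by rewrite H0.
rewrite !eqxx big1 ?addr0; last first.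
  by move=> e /andP[_ ne]; case: eqP => // -[] E; rewrite E eqxx in ne.
rewrite subrK; congr g; congr pair; apply: mray_ext.
rewrite mray_consE /= /ray_behead /= ?E0 //.
by rewrite /ray_cons /= H0; congr pair; apply: funext => -[|k].
Qed.

Lemma ray_leavitt_family : LeavittFamily s r vertex_op edge_op ghost_op.
Proof.
split; [|split; [|split; [|split; [|split; [|split; [|split]]]]]].
- by move=> v; apply: linend_ext => g t /=; case: ifP => H; rewrite ?H.
- move=> v w ne; apply: linend_ext => g t /=.
  by case: ifP => // /eqP E; case: ifP => // /eqP E'; rewrite -E -E' eqxx in ne.
- move=> e f ne; apply: linend_ext => g t /=.
  case: ifP => // /eqP E; rewrite mray_consE //=; case: eqP => // -[] E'.
  by rewrite E' eqxx in ne.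
- move=> e; apply: linend_ext => g t /=.
  rewrite eq_sym; case: ifP => // /eqP E; rewrite mray_consE //= eqxx mray_consK //.
  by rewrite addrK; case: t E.
- move=> e; split; apply: linend_ext => g t /=.
    case: ifP => //; case: ifP => // /eqP F0 NE.
    case: t => [[[v f] H] n] /= in F0 NE *.
    by have := H 0; rewrite /= F0 => E; rewrite E eqxx in NE.
  by case: ifP => // /eqP E /=; rewrite /ray_behead /= E eqxx.
- move=> e; split; apply: linend_ext => g t /=.
    by case: ifP => // /eqP E; rewrite mray_consE //= eqxx.
  by rewrite eq_sym; case: ifP => H; rewrite ?H.
- exact: ray_cuntz_krieger.
- apply: linend_ext => g t; rewrite lapp_sum /=.
  rewrite (bigD1 (sval t.1).1) //= eqxx big1 ?addr0 // => v ne.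
  by rewrite eq_sym (negbTE ne).
Qed.

Local Notation hL := ray_leavitt_family.

Lemma lapp_ray_pmon_star p G x n : gp p ->
  lapp (pmon_star vertex_op ghost_op p) G (x, n) =
  if pend r p == (sval x).1 then G (mray_cat p.2 x, n + (size p.2)%:Z) else 0.
Proof.
case: p => v es; elim: es v G n => [|e es IH] v G n H.
  by rewrite /= /pend /= addr0 eq_sym.
rewrite (pmon_star_cons hL H) /=; move: H; rewrite gpath_cons => /andP[/eqP se H].
rewrite (IH _ _ _ H) -[pend r (v, e :: es)]/(pend r (r e, es)).
case: eqP => // E; rewrite /= (mray_cat_head H E) eqxx.
by congr (G (_, _)); lia.
Qed.

Lemma lapp_ray_pmon_shift p g x n : gp p ->
  lapp (pmon vertex_op edge_op p) g (x, n) = 0 \/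
  exists y, lapp (pmon vertex_op edge_op p) g (x, n) = g (y, n - (size p.2)%:Z).
Proof.
case: p => v es; elim: es v x n => [|e es IH] v x n H.
  by rewrite /=; case: ifP => _; [right; exists x; rewrite subr0 | left].
rewrite (pmon_cons hL H) /=; move: H; rewrite gpath_cons => /andP[_ H].
case: ifP => _; last by left.
have [->|[y ->]] := IH _ (mray_behead x) (n - 1) H; [by left | right; exists y].
by congr (g (y, _)); rewrite /=; lia.
Qed.

Lemma lapp_ray_pmon_cat p q g x n : gp p -> gp q -> pend r q = (sval x).1 ->
  size p.2 = size q.2 ->
  lapp (pmon vertex_op edge_op p) g (mray_cat q.2 x, n) =
  if p == q then g (x, n - (size q.2)%:Z) else 0.
Proof.
case: p => v es; case: q => w fs.
elim: fs v w es n => [|f fs IH] v w [|e es] n //= Hp Hq E Sz.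
  by rewrite -E /pend /= subr0 xpair_eqE eqxx andbT eq_sym.
move: Hq; rewrite gpath_cons => /andP[/eqP sf Hq'].
move: (Hp); rewrite gpath_cons => /andP[/eqP se Hp'].
have St := mray_cat_head Hq' E.
rewrite (pmon_cons hL Hp) /= mray_consE //= mray_consK //.
have [EE|ne] := eqVneq f e; last first.
  rewrite /ray_cons /=; case: eqP => [[] x1|_]; first by rewrite x1 eqxx in ne.
  by case: eqP => // -[_ x1 _]; rewrite x1 eqxx in ne.
subst e; rewrite /ray_cons /= eqxx.
rewrite (IH (r f) (r f) es (n - 1) Hp' Hq' E); last by case: Sz.
rewrite !xpair_eqE /= eqxx /= -se -sf eqxx /= eqseq_cons eqxx /=.
by case: eqP => // _; congr (g (_, _)); rewrite /=; lia.
Qed.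

End RayRepresentation.

Section CanonicalRay.
Variables (V Ed : finType) (s r : Ed -> V).

Definition first_edge (v : V) : option Ed := [pick e | s e == v].

Fixpoint canon_vertex (w : V) (k : nat) : V :=
  if k is k'.+1 then
    if first_edge (canon_vertex w k') is Some e then r e else canon_vertex w k'
  else w.

Definition canon_raw (w : V) : ray V Ed := (w, fun k => first_edge (canon_vertex w k)).

Lemma canon_ray_maximal w : ray_maximal s r (canon_raw w).
Proof.
have vertexE k : ray_vertex r (canon_raw w) k = canon_vertex w k.
  by elim: k => [|k IH] //=; rewrite IH.
move=> k; rewrite vertexE /= /first_edge; case: pickP => [e /eqP //|H e E].
by have := H e; rewrite E eqxx.
Qed.

Definition canon_ray (w : V) : mray s r := exist _ (canon_raw w) (canon_ray_maximal w).

End CanonicalRay.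

Section PathFunctional.
Variables (R : comNzRingType) (V Ed : finType) (s r : Ed -> V)
  (A : algType R) (pv : V -> A) (pe pe' : Ed -> A)
  (hA : IsLeavittPathAlgebra s r pv pe pe').
Local Notation gp := (is_gpath s r).

(* [phi x] evaluates the ray representation of [x] on the indicator of level [0]
   at the canonical ray from [w]. *)
Lemma lpa_path_functional (w : V) : exists phi : A -> R,
  [/\ forall x y, phi (x + y) = phi x + phi y,
      forall k x, phi (k *: x) = k * phi x &
      forall p q, gp p -> gp q -> pend r p = w -> pend r q = w ->
        phi (pmon_star pv pe' p * pmon pv pe q) = (p == q)%:R].
Proof.
pose t0 : state s r := (canon_ray s r w, 0%R).
have [P [hP [Pv Pe]]] := hA.2.1 _ _ _ _ (ray_leavitt_family R t0).
pose g0 (t : state s r) : R := (t.2 == 0)%:R.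
exists (fun y => lapp (P y) g0 t0); split.
- by move=> x y; rewrite (alg_homD hP).
- by move=> k x; rewrite (alg_homZ hP).
move=> p q Hp Hq Ep Eq.
rewrite (alg_homM hP) /= (alg_hom_pmon_star hP) (alg_hom_pmon hP).
have -> : P \o pv = vertex_op R t0 by apply: funext => v; rewrite /= Pv.
have -> : P \o pe = edge_op R t0 by apply: funext => e; case: (Pe e).
have -> : P \o pe' = ghost_op R t0 by apply: funext => e; case: (Pe e).
rewrite (lapp_ray_pmon_star _ _ _ _ Hp) Ep /= eqxx add0r.
have [Sz|Sz] := eqVneq (size q.2) (size p.2).
  rewrite (lapp_ray_pmon_cat t0 g0 _ Hq Hp) //= ?Ep // /g0 /= subrr eqxx eq_sym.
  by case: (p == q).
have [->|[y ->]] := lapp_ray_pmon_shift t0 g0 (mray_cat p.2 (canon_ray s r w)) (size p.2)%:Z Hq.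
  by case: eqP => // E; rewrite E eqxx in Sz.
rewrite /g0 /= subr_eq0 eqz_nat eq_sym (negbTE Sz).
by case: eqP => // E; rewrite E eqxx in Sz.
Qed.
End PathFunctional.

Lemma sum_reindex_injective (R : pzRingType) (M : lmodType R) (T : eqType) (F : T -> M)
    n (sg : 'I_n -> T) (d : 'I_n -> R) :
  exists m (tau : 'I_m -> T) (D : 'I_m -> R),
    [/\ injective tau, forall i, exists j, tau i = sg j &
        \sum_j d j *: F (sg j) = \sum_i D i *: F (tau i)].
Proof.
pose U := undup [seq sg j | j <- enum 'I_n].
have memU j : sg j \in U by rewrite mem_undup map_f ?mem_enum.
pose tau (i : 'I_(size U)) := tnth (in_tuple U) i.
have idx_lt j : (index (sg j) U < size U)%N by rewrite index_mem.
pose idx j : 'I_(size U) := Ordinal (idx_lt j).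
have idxE j i : (idx j == i) = (sg j == tau i).
  rewrite /tau (tnth_nth (sg j)) -val_eqE /=; apply/eqP/eqP => [<-|E].
    by rewrite nth_index.
  by rewrite {1}E index_uniq ?undup_uniq.
exists (size U), tau, (fun i => \sum_(j | sg j == tau i) d j); split.
- exact/tuple_uniqP/undup_uniq.
- move=> i; have /mapP[j _ E] : tau i \in [seq sg j | j <- enum 'I_n].
    by rewrite -mem_undup mem_tnth.
  by exists j.
rewrite (partition_big idx xpredT) //=; apply: eq_bigr => i _; rewrite scaler_suml.
by apply: eq_big => j; rewrite ?idxE // => /eqP ->.
Qed.

Section Unitaries.
Variables (C : numClosedFieldType) (R : comNzRingType) (iota : {rmorphism R -> C})
  (conjR : R -> R) (conjR_spec : forall k : R, iota (conjR k) = (iota k)^*)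
  (V Ed : finType) (s r : Ed -> V)
  (A : algType R) (pv : V -> A) (pe pe' : Ed -> A) (star : A -> A)
  (hA : IsLeavittPathAlgebra s r pv pe pe')
  (hstar : IsLPAInvolution conjR pv pe pe' star).
Local Notation gp := (is_gpath s r).
Local Notation mon := (pmon pv pe).
Local Notation mon' := (pmon_star pv pe').
Let hL : LeavittFamily s r pv pe pe' := hA.1.

Definition path_to (w : V) (y : A) := exists rho, [/\ gp rho, pend r rho = w & y = mon rho].

Lemma norm_conjR_mul k : iota (conjR k * k) = `|iota k| ^+ 2.
Proof. by rewrite rmorphM conjR_spec normCK mulrC. Qed.

Lemma sqr_norm_sum_path_comb w m (tau : 'I_m -> V * seq Ed) (D : 'I_m -> R) :
  injective tau -> (forall i, gp (tau i) /\ pend r (tau i) = w) ->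
  star (\sum_i D i *: mon (tau i)) * (\sum_i D i *: mon (tau i)) = pv w ->
  \sum_i `|iota (D i)| ^+ 2 = 1.
Proof.
move=> tau_inj tauG Hx.
have [phi [phiD phiZ phiP]] := lpa_path_functional hA w.
have phiS (I : Type) (rr : seq I) (P : pred I) (F : I -> A) :
    phi (\sum_(i <- rr | P i) F i) = \sum_(i <- rr | P i) phi (F i).
  elim/big_rec2: _ => [|i y1 y2 _ <-]; last exact: phiD.
  by rewrite -(scale0r 0) phiZ mul0r.
have phi_w : phi (pv w) = 1.
  by rewrite -(lf_idem hL) -[pv w * _]/(mon' (w, [::]) * mon (w, [::])) phiP ?eqxx.
rewrite -(rmorph1 iota) -phi_w -Hx (star_sum hstar) mulr_suml phiS rmorph_sum.
apply: eq_bigr => i _; rewrite -norm_conjR_mul (starZ hstar) (star_pmon hstar).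
rewrite mulr_sumr phiS (bigD1 i) //= big1 ?addr0 => [|i' ne].
  by rewrite -scalerAl -scalerAr scalerA phiZ; case: (tauG i) => ? ?; rewrite phiP // eqxx mulr1.
rewrite -scalerAl -scalerAr scalerA phiZ; case: (tauG i) => ? ?; case: (tauG i') => ? ?.
by rewrite phiP // (inj_eq tau_inj) eq_sym (negbTE ne) mulr0.
Qed.

Hypothesis hR : EUPU iota.

Lemma isometry_path_comb w x : lincomb (path_to w) x -> star x * x = pv w ->
  exists rho lam, [/\ gp rho, x = lam *: mon rho & `|iota lam| = 1].
Proof.
move=> [n [c [d [Hc ->]]]]; have [sg Hsg] := choice Hc.
have -> : \sum_j d j *: c j = \sum_j d j *: mon (sg j).
  by apply: eq_bigr => j _; case: (Hsg j) => _ _ <-.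
have [m [tau [D [tau_inj tauP ->]]]] := sum_reindex_injective mon sg d.
have tauG i : gp (tau i) /\ pend r (tau i) = w by have [j ->] := tauP i; case: (Hsg j).
move=> /(sqr_norm_sum_path_comb tau_inj tauG) hsum; have [i0 Hi0] := hR hsum.
exists (tau i0), (D i0); split; first by case: (tauG i0).
  by rewrite (bigD1 i0) //= big1 ?addr0 // => i /Hi0 ->; rewrite scale0r.
move: hsum; rewrite (bigD1 i0) //= big1 ?addr0 => [|i /Hi0 ->]; last first.
  by rewrite rmorph0 normr0 expr0n.
by move/eqP; rewrite sqrp_eq1 ?normr_ge0 // => /eqP.
Qed.

Lemma unitary_mul_pmon N u g : star u * u = 1 -> lincomb (short_pmon s r pv pe pe' N) u ->
  gp g -> (N <= size g.2)%N \/ is_sink s (pend r g) ->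
  exists rho lam, [/\ gp rho, u * mon g = lam *: mon rho & `|iota lam| = 1].
Proof.
move=> hu hspan Hg Hlong; apply: (@isometry_path_comb (pend r g)); last first.
  rewrite (starM hstar) (star_pmon hstar) mulrA -(mulrA (mon' g)) hu mulr1.
  exact: (pmon_starK hL).
apply: (lincomb_mulr hspan) => _ [a [b [Ha Hb Hsz ->]]]; rewrite -mulrA.
have Hbg : (size b.2 <= size g.2)%N \/ is_sink s (pend r g).
  by case: Hlong => [le_Ng|]; [left; apply: leq_trans le_Ng | right].
have [->|[rho [Hr Er ->]]] := pmon_star_mul hL Hb Hg Hbg; first by rewrite mulr0; exact: lincomb0.
have [->|[rho' [Hr' Er' ->]]] := pmon_mul hL Ha Hr; first exact: lincomb0.
by apply: lincomb_gen; exists rho'; rewrite Er' Er.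
Qed.

Lemma scaled_pmon_starK (iota_inj : injective iota) lam rho : `|iota lam| = 1 ->
  (lam *: mon rho) * star (lam *: mon rho) = mon rho * mon' rho.
Proof.
move=> Hlam; have lamK : lam * conjR lam = 1.
  by apply: iota_inj; rewrite mulrC norm_conjR_mul Hlam expr1n rmorph1.
by rewrite (starZ hstar) (star_pmon hstar) -scalerAl -scalerAr scalerA lamK scale1r.
Qed.

End Unitaries.

Theorem proposition4p4
  (C : numClosedFieldType) (R : comNzRingType) (iota : {rmorphism R -> C})
  (iota_inj : injective iota) (conjR : R -> R)
  (conjR_spec : forall k : R, iota (conjR k) = (iota k)^*)
  (hR : EUPU iota)
  (V Ed : finType) (s r : Ed -> V)
  (A : algType R) (pv : V -> A) (pe pe' : Ed -> A) (star : A -> A)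
  (hA : IsLeavittPathAlgebra s r pv pe pe')
  (hstar : IsLPAInvolution conjR pv pe pe' star)
  (u : A) (hu : u * star u = 1 /\ star u * u = 1) :
  exists (n : nat) (a b : 'I_n -> V * seq Ed) (l : 'I_n -> R),
    (forall i, is_gpath s r (a i) /\ is_gpath s r (b i)) /\
    u = \sum_(i < n) l i *: (pmon pv pe (a i) * pmon_star pv pe' (b i)) /\
    \sum_(i < n) pmon pv pe (a i) * pmon_star pv pe' (a i) = 1 /\
    \sum_(i < n) pmon pv pe (b i) * pmon_star pv pe' (b i) = 1 /\
    (forall i, `|iota (l i)| = 1).
Proof.
have [hu1 hu2] := hu; have [N hspan] := lpa_span_short_pmon hA u.
have [n [b [Hb bsum Hlong]]] := path_partition_of_unity hA.1 N.
have K i : exists rl : (V * seq Ed) * R, [/\ is_gpath s r rl.1,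
    u * pmon pv pe (b i) = rl.2 *: pmon pv pe rl.1 & `|iota rl.2| = 1].
  have [rho [lam Hrl]] := unitary_mul_pmon conjR_spec hA hstar hR hu2 hspan (Hb i) (Hlong i).
  by exists (rho, lam).
have [al Hal] := choice K.
exists n, (fun i => (al i).1), b, (fun i => (al i).2); split; [|split; [|split; [|split]]] => //.
- by move=> i; case: (Hal i).
- rewrite -[u]mulr1 -bsum mulr_sumr; apply: eq_bigr => i _.
  by case: (Hal i) => _ E _; rewrite mulrA E scalerAl.
- rewrite -hu1 -{1}[u]mulr1 -bsum mulr_sumr mulr_suml; apply: eq_bigr => i _.
  case: (Hal i) => _ E Hl; rewrite -(scaled_pmon_starK conjR_spec hstar iota_inj _ Hl) -E.
  by rewrite (starM hstar) (star_pmon hstar) !mulrA.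
- by move=> i; case: (Hal i).
Qed.
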